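(* For every integer $s \geq 1$, every integer $m \geq 1$, every integer $\ell > |V(H[s])| + m + s$, and every graph $H[s,\ell,m]$ constructed as described, it holds that $c(H[s,\ell,m]) \leq 2$.
   Context: Construction. Let $s \geq 1$ and $k = 2^{s-1}$. Let $H[s]$ be any $2k$-regular graph with girth at least $5$, endowed with an orientation in which every vertex has exactly $k$ outgoing and $k$ incoming edges. Given an integer $\ell \geq 1$, build $H[s,\ell]$: for each vertex $a$ of $H[s]$ take a complete balanced binary tree $T(a)$ of height $s$ with root $r(a)$ and $2^s = 2k$ leaves; let $r^{\mathrm{in}}(a), r^{\mathrm{out}}(a)$ be the two children of $r(a)$ and $T^{\mathrm{in}}(a), T^{\mathrm{out}}(a)$ the subtrees rooted at them. Associate bijectively the $k$ leaves of $T^{\mathrm{in}}(a)$ with the $k$ incoming edges at $a$ and the $k$ leaves of $T^{\mathrm{out}}(a)$ with the $k$ outgoing edges at $a$. For each edge $ab$ of $H[s]$ oriented from $a$ to $b$, join the leaf of $T^{\mathrm{out}}(a)$ associated with $ab$ to the leaf of $T^{\mathrm{in}}(b)$ associated with $ab$ by a path $P(ab)$ of length $2\ell+1$ (with $2\ell$ new inner vertices); let $e(ab)$ be its middle edge, with endpoint $v(a,b)$ on the side of $a$ and $v(b,a)$ on the side of $b$. Given an integer $m \geq 1$, build $H[s,\ell,m]$: take two vertex-disjoint copies $H_1, H_2$ of $H[s,\ell]$ (with notation indexed by $1,2$), and for every edge $ab$ of $H[s]$ identify $e_1(ab)$ with $e_2(ab)$ so that $v_1(a,b)=v_2(a,b)$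 and $v_1(b,a)=v_2(b,a)$. For each vertex $a$ of $H[s]$ attach to $r_1(a)$ a new path $Q(a)$ of length $m$ with other endpoint $q(a)$. Finally add a cycle $C$ of length $|V(H[s])|$ passing through all vertices $q(a)$, $a \in V(H[s])$. Classical Cops and Robber: players alternate turns, cops first; the cops are placed on vertices, then the robber is placed on a vertex; in a turn each piece of the moving player may stay or move to an adjacent vertex; cops win if some cop is on the robber's vertex; $c(G)$ is the least number of cops that can force a win in finitely many turns. *)

From mathcomp Require Import all_boot.
Set Implicit Arguments.
Unset Strict Implicit.
Unset Printing Implicit Defensive.

Definition und (V : finType) (arc : rel V) : rel V :=
  fun a b => arc a b || arc b a.

Definition girth_ge (V : finType) (e : rel V) (g : nat) : Prop :=
  forall c : seq V, 3 <= size c -> cycle e c -> uniq c -> g <= size c.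

Definition Hs_oriented (s : nat) (V : finType) (arc : rel V) : Prop :=
  [/\ (forall a, ~~ arc a a) /\ (forall a b, arc a b -> ~~ arc b a),
      (forall a, #|[set b | und arc a b]| = 2 * 2 ^ (s - 1)),
      (forall a, #|[set b | arc a b]| = 2 ^ (s - 1)),
      (forall a, #|[set b | arc b a]| = 2 ^ (s - 1)) &
      girth_ge (und arc) 5].

Definition nbc (W : finType) (adj : rel W) (x y : W) : bool :=
  (x == y) || adj x y.

(* cops_win adj C r : it is the cops' turn, cops are at C, robber at r,
   and the cops can force a capture in finitely many turns (inductive,
   i.e. least-fixed-point, definition of "can force a win"). *)
Inductive cops_win (W : finType) (adj : rel W) (k : nat)
  : {ffun 'I_k -> W} -> W -> Prop :=
| CW_caught (C : {ffun 'I_k -> W}) (r : W) : [exists i, C i == r] -> cops_win adj C r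
| CW_move (C : {ffun 'I_k -> W}) (r : W) (C' : {ffun 'I_k -> W}) :
    (forall i, nbc adj (C i) (C' i)) ->
    ([exists i, C' i == r] \/
     (forall r', nbc adj r r' -> cops_win adj C' r')) ->
    cops_win adj C r.

(* k cops have a winning strategy: cops are placed first, then the robber,
   then the cops move first. *)
Definition k_cops_win (W : finType) (adj : rel W) (k : nat) : Prop :=
  exists C0 : {ffun 'I_k -> W}, forall r0 : W, cops_win adj C0 r0.

Definition cop_number_le (W : finType) (adj : rel W) (n : nat) : Prop :=
  exists j, j <= n /\ k_cops_win adj j.

Definition arcT (V : finType) (arc : rel V) := {p : V * V | arc p.1 p.2}.

(* Vertices of H[s,l,m]:
   - Tree (a, c, i): node i (heap numbering: root 0, children of i are
     2i+1, 2i+2; r^in = 1, r^out = 2) of the tree T_c(a) in copy c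
     (false = copy 1, true = copy 2); there are 2^(s+1)-1 nodes;
     leaves are 2^s-1 .. 2^(s+1)-2, those of T^in are 2^s-1+j (j<k), those
     of T^out are 2^s-1+k+j (j<k).
   - Mid (e, t): the shared endpoints of the middle edge e(ab) for the
     arc e = ab; t = false is v(a,b), t = true is v(b,a).
   - Side (e, c, t, d): non-shared inner vertex of P_c(ab) on the side
     of a (t = false) or of b (t = true) at distance d+1 from the leaf.
   - Q (a, j): vertex of the path Q(a), at distance j+1 from r_1(a);
     q(a) = Q (a, m-1). *)
Definition HV (s l m : nat) (V : finType) (arc : rel V) : finType :=
  ((V * bool * 'I_(2 ^ s.+1 - 1))
   + ((arcT arc * bool)
      + ((arcT arc * bool * bool * 'I_(l - 1)) + (V * 'I_m))))%type.

Section Construction.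
Variables (s l m : nat) (V : finType) (arc : rel V).
Variables (pin pout : arcT arc -> 'I_(2 ^ (s - 1))).
Variable (sigma : 'I_#|V| -> V).

Let k := 2 ^ (s - 1).

Definition leaf_ok (a : V) (e : arcT arc) (t : bool) (i : nat) : bool :=
  if t then ((val e).2 == a) && (i == 2 ^ s - 1 + pin e)
  else ((val e).1 == a) && (i == 2 ^ s - 1 + k + pout e).

Definition cyc_next (a b : V) : bool :=
  [exists i : 'I_#|V|, exists j : 'I_#|V|,
     [&& sigma i == a, sigma j == b & val j == (val i).+1 %% #|V|]].

Definition Hgen (x y : HV s l m arc) : bool :=
  match x, y with
  | inl (a, c, i), inl (b, c', j) =>
      [&& a == b, c == c' & (val j == (val i).*2.+1) || (val j == (val i).*2.+2)]
  | inl (a, c, i), inr (inr (inl (e, c', t, d))) =>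
      [&& c == c', val d == 0 & leaf_ok a e t i]
  | inl (a, c, i), inr (inl (e, t)) =>
      (l - 1 == 0) && leaf_ok a e t i
  | inr (inr (inl (e, c, t, d))), inr (inr (inl (e', c', t', d'))) =>
      [&& e == e', c == c', t == t' & val d' == (val d).+1]
  | inr (inr (inl (e, c, t, d))), inr (inl (e', t')) =>
      [&& e == e', t == t' & val d == l - 2]
  | inr (inl (e, false)), inr (inl (e', true)) => e == e'
  | inl (a, c, i), inr (inr (inr (b, j))) =>
      [&& a == b, c == false, val i == 0 & val j == 0]
  | inr (inr (inr (a, i))), inr (inr (inr (b, j))) =>
      ((a == b) && (val j == (val i).+1))
      || [&& val i == m - 1, val j == m - 1 & cyc_next a b]
  | _, _ => false
  end.

Definition Hslm_adj : rel (HV s l m arc) := fun x y => Hgen x y || Hgen y x.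

End Construction.

From mathcomp Require Import all_boot.
From mathcomp Require Import zify.

(* Both cops start at q(a_0), a_0 = sigma 0.  The copy-1 trees, the paths Q(a) and the
   cycle C minus one edge form a tree [core] rooted there.  Folding copy 2 onto copy 1 and
   then each path P_1(ab) onto the walk in the core between its end leaves is a map
   [retract] onto the core that does not increase distances: the path has 2l + 1 edges and
   the walk fewer, because l > |V| + m + s.
   Each stage of the strategy is the same pursuit: one cop stays next to a nonexpansive
   image of the robber, so the robber can never step onto that image, while the other cop
   walks in a rooted tree towards a target that moves along tree edges, which a cop in a
   tree always catches.  First the guard sits at the root and the hunter chases the
   retraction of the robber in the core.  Then a cop shadows the retraction while the
   other chases the folded robber in a spanning tree of copy 1.  Then a cop shadows the
   folded robber, which confines the robber to the copy-2 tree T_2(a) with its half-paths;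
   the other cop walks to a [gate] of that spider and hunts the robber down inside it. *)

Set Implicit Arguments.
Unset Strict Implicit.
Unset Printing Implicit Defensive.

Section CopsAndRobber.
Variables (W : finType) (adj : rel W).
Hypothesis adj_sym : forall x y, adj x y -> adj y x.

Lemma nbc_refl x : nbc adj x x.
Proof. by rewrite /nbc eqxx. Qed.

Lemma nbc_sym x y : nbc adj x y -> nbc adj y x.
Proof. by rewrite /nbc eq_sym => /orP[->|/adj_sym ->]; rewrite ?orbT. Qed.

Lemma cops_win_nbc k (C : {ffun 'I_k -> W}) r i : nbc adj (C i) r -> cops_win adj C r.
Proof.
move=> near_r.
apply: (@CW_move _ _ _ C r [ffun j => if j == i then r else C j]).
  by move=> j; rewrite ffunE; case: eqP => [->|_] //; apply: nbc_refl.
by left; apply/existsP; exists i; rewrite ffunE eqxx.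
Qed.

Lemma k_cops_win0 : (W -> False) -> k_cops_win adj 0.
Proof. by move=> W_empty; exists (ffun0 (card_ord 0)) => r; case: (W_empty r). Qed.

Lemma cops_win_measure k (P : {ffun 'I_k -> W} -> W -> Prop)
    (mu : {ffun 'I_k -> W} -> W -> nat) :
  (forall C r, P C r -> exists2 C' : {ffun 'I_k -> W}, (forall i, nbc adj (C i) (C' i)) &
     forall r', nbc adj r r' -> cops_win adj C' r' \/ P C' r' /\ mu C' r' < mu C r) ->
  forall C r, P C r -> cops_win adj C r.
Proof.
move=> progress C r.
elim: (mu C r).+1 {-2}C {-2}r (ltnSn (mu C r)) => // b IH C1 r1 lt_b P1.
have [C' moves next] := progress C1 r1 P1.
apply: (CW_move moves); right => r' rr'.
case: (next r' rr') => [//|[P' lt']].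
by apply: IH P'; lia.
Qed.

Definition cops2 (ig : 'I_2) (x y : W) : {ffun 'I_2 -> W} :=
  [ffun i => if i == ig then x else y].

Lemma cops2_l ig x y : cops2 ig x y ig = x.
Proof. by rewrite ffunE eqxx. Qed.

Lemma cops2_r ig ih x y : ig != ih -> cops2 ig x y ih = y.
Proof. by move=> ne; rewrite ffunE eq_sym (negbTE ne). Qed.

Lemma ord2_other (i ig ih : 'I_2) : ig != ih -> i != ig -> i = ih.
Proof.
move=> ne_gh ne_ig; apply/val_inj; move: ne_gh ne_ig (ltn_ord i) (ltn_ord ig) (ltn_ord ih).
rewrite -!(inj_eq val_inj) /= => /eqP ? /eqP ?; lia.
Qed.

Lemma cops2_nbc (C : {ffun 'I_2 -> W}) ig ih x y : ig != ih ->
  nbc adj (C ig) x -> nbc adj (C ih) y -> forall i, nbc adj (C i) (cops2 ig x y i).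
Proof.
move=> ne nx ny i; rewrite ffunE; case: eqP => [->//|/eqP ne_i].
by rewrite (ord2_other ne ne_i).
Qed.

Section RootedTree.
Variables (D : pred W) (par : W -> W) (dep : W -> nat).
Hypothesis par_edge : forall x, x \in D -> 0 < dep x ->
  [/\ par x \in D, dep (par x) = (dep x).-1 & adj x (par x)].

Definition tree_root x := iter (dep x) par x.

Definition tree_step u v :=
  [|| u == v, (0 < dep u) && (v == par u) | (0 < dep v) && (u == par v)].

Definition ancestor c t := (dep c < dep t) && (iter (dep t - dep c) par t == c).

Lemma tree_step_refl u : tree_step u u.
Proof. by rewrite /tree_step eqxx. Qed.

Lemma tree_step_sym u v : tree_step u v -> tree_step v u.
Proof. by rewrite /tree_step eq_sym => /or3P[->|->|->]; rewrite ?orbT. Qed.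

Lemma iter_par_dom x j : x \in D -> j <= dep x ->
  iter j par x \in D /\ dep (iter j par x) = dep x - j.
Proof.
move=> Dx; elim: j => [|j IH] lt_j; first by rewrite subn0.
have [Dj dep_j] := IH (ltnW lt_j).
have [Dj' dep_j' _] := par_edge Dj ltac:(by rewrite dep_j subn_gt0).
by rewrite iterS Dj' dep_j' dep_j; split => //; lia.
Qed.

Lemma tree_root_iter x j : x \in D -> j <= dep x -> tree_root (iter j par x) = tree_root x.
Proof.
move=> Dx le_j; have [_ dep_j] := iter_par_dom Dx le_j.
by rewrite /tree_root dep_j -iterD subnK.
Qed.

Lemma tree_root_step u v : u \in D -> v \in D -> tree_step u v -> tree_root u = tree_root v.
Proof.
move=> Du Dv /or3P[/eqP->//|/andP[du /eqP->]|/andP[dv /eqP->]].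
  by symmetry; exact: (tree_root_iter (j := 1) Du du).
exact: (tree_root_iter (j := 1) Dv dv).
Qed.

Lemma ancestor_step c t : c \in D -> t \in D -> ancestor c t -> ~~ nbc adj c t ->
  let c' := iter (dep t - dep c).-1 par t in
  [/\ c' \in D, tree_root c' = tree_root t, dep c' = (dep c).+1, adj c' c &
   forall t', tree_step t t' -> t' \in D -> ~~ nbc adj c' t' -> ancestor c' t'].
Proof.
move=> Dc Dt /andP[lt_ct /eqP iter_c] far_ct.
have gap : 1 < dep t - dep c.
  case E: (dep t - dep c) => [|[|j]] //; first by move: lt_ct; rewrite -subn_gt0 E.
  move: far_ct; rewrite -iter_c E.
  have [_ _ a_tp] := par_edge Dt (leq_ltn_trans (leq0n _) lt_ct).
  by rewrite /= nbc_sym // /nbc a_tp orbT.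
set j := (dep t - dep c).-1 => c'.
have dep_t : dep t = j.+1 + dep c by rewrite /j prednK ?subnK //; apply: ltnW.
have j_gt0 : 0 < j by rewrite /j -subn1 subn_gt0.
have le_j : j <= dep t by lia.
have [Dc' dep_c'] := iter_par_dom Dt le_j.
have {}dep_c' : dep c' = (dep c).+1 by rewrite dep_c' dep_t; lia.
have c_par : c = par c' by rewrite /c' -iterS -iter_c dep_t addnK.
have [_ _ a_c'] := par_edge Dc' ltac:(by rewrite dep_c').
split => //; first exact: tree_root_iter.
  by rewrite c_par.
move=> t' /or3P[/eqP<-|/andP[dt /eqP t'E]|/andP[dt' /eqP t'E]] Dt' far'.
- rewrite /ancestor dep_c' dep_t; apply/andP; split; first by lia.
  by have -> : j.+1 + dep c - (dep c).+1 = j by lia.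
- have [_ dep_pt _] := par_edge Dt dt.
  have j_gt1 : 1 < j.
    case E: j => [|[|jj]] //; first by rewrite E in j_gt0.
    by move: far'; rewrite t'E /c' E /nbc eqxx.
  rewrite /ancestor t'E dep_pt dep_c' dep_t; apply/andP; split; first by lia.
  have -> : (j.+1 + dep c).-1 - (dep c).+1 = j.-1 by lia.
  by rewrite -iterSr prednK.
- have [_ dep_pt' _] := par_edge Dt' dt'.
  have dep_t' : dep t' = (dep t).+1 by rewrite t'E dep_pt' prednK.
  rewrite /ancestor dep_c'; apply/andP; split; first by lia.
  have -> : dep t' - (dep c).+1 = j.+1 by lia.
  by rewrite iterSr -t'E.
Qed.

Lemma not_ancestor_dep_gt0 c t : c \in D -> t \in D -> ~~ ancestor c t ->
  tree_root c = tree_root t -> t != c -> 0 < dep c.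
Proof.
move=> Dc Dt not_anc same_root ne.
case dc: (dep c) => [|//]; exfalso.
have root_c : tree_root c = c by rewrite /tree_root dc.
case dt: (dep t) => [|d].
  by move: same_root; rewrite root_c /tree_root dt /= => ct; rewrite ct eqxx in ne.
have iter_t : iter (dep t) par t = c by rewrite -/(tree_root t) -same_root root_c.
by move/negP: not_anc; apply; rewrite /ancestor dc subn0 iter_t dt eqxx.
Qed.

Lemma iter_par_adj x j : x \in D -> j < dep x -> adj (iter j par x) (iter j.+1 par x).
Proof.
move=> Dx lt_j; have [Dj dep_j] := iter_par_dom Dx (ltnW lt_j).
have [_ _ a_j] := par_edge Dj ltac:(by rewrite dep_j subn_gt0).
by rewrite iterS.
Qed.

Definition tree_walk x y p :=
  if p <= dep x then iter p par x else iter (dep x + dep y - p) par y.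

Lemma tree_walk_dom x y p : x \in D -> y \in D -> tree_walk x y p \in D.
Proof.
move=> Dx Dy; rewrite /tree_walk; case: ifP => [le_p|/negbT lt_p].
  by case: (iter_par_dom Dx le_p).
by case: (iter_par_dom Dy (_ : dep x + dep y - p <= dep y)) => //; lia.
Qed.

Section TreeWalk.
Variables x y : W.
Hypothesis same_root : tree_root x = tree_root y.

Lemma tree_walk_down p : dep x <= p -> tree_walk x y p = iter (dep x + dep y - p) par y.
Proof.
rewrite /tree_walk leq_eqVlt => /orP[/eqP <-|lt_p]; last by rewrite leqNgt lt_p.
by rewrite leqnn addKn.
Qed.

Lemma tree_walk_end p : dep x + dep y <= p -> tree_walk x y p = y.
Proof.
by move=> le_p; rewrite tree_walk_down; [have -> : dep x + dep y - p = 0 by lia | lia].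
Qed.

Lemma tree_walk_step p : x \in D -> y \in D ->
  nbc adj (tree_walk x y p) (tree_walk x y p.+1).
Proof.
move=> Dx Dy; case: (ltnP p (dep x)) => [lt_p|le_p].
  rewrite /tree_walk ltnW // lt_p /nbc iter_par_adj ?orbT //.
rewrite !tree_walk_down //; last exact: leqW.
case E: (dep x + dep y - p) => [|j].
  have -> : dep x + dep y - p.+1 = 0 by lia.
  exact: nbc_refl.
have -> : dep x + dep y - p.+1 = j by lia.
by rewrite nbc_sym // /nbc iter_par_adj ?orbT //; lia.
Qed.

End TreeWalk.

Definition depth_bound := \max_(x : W) dep x.

(* The hunter descends towards the target while it is an ancestor of it and climbs
   otherwise; both moves decrease this measure. *)
Definition chase_measure c t :=
  if ancestor c t then depth_bound - dep c else depth_bound.+1 + dep c.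

Lemma tree_pursuit c t : c \in D -> t \in D -> tree_root c = tree_root t ->
  ~~ nbc adj c t ->
  exists2 c', c' \in D /\ nbc adj c c' &
    forall t', t' \in D -> tree_step t t' -> ~~ nbc adj c' t' ->
      tree_root c' = tree_root t' /\ chase_measure c' t' < chase_measure c t.
Proof.
move=> Dc Dt same_root far.
have dep_le x : dep x <= depth_bound by exact: (leq_bigmax (F := dep)).
case anc: (ancestor c t).
  have [Dc' root_c' dep_c' a_c' anc'] := ancestor_step Dc Dt anc far.
  set c' := iter _ par t in Dc' root_c' dep_c' a_c' anc'.
  exists c'; first by split; rewrite // nbc_sym // /nbc a_c' orbT.
  move=> t' Dt' step far'; split; first by rewrite root_c' (tree_root_step Dt Dt' step).
  rewrite /chase_measure anc anc' //; have := dep_le c'; lia.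
have ne : t != c by apply: contraNneq far => ->; exact: nbc_refl.
have dc := not_ancestor_dep_gt0 Dc Dt (negbT anc) same_root ne.
have [Dp dep_p a_p] := par_edge Dc dc.
exists (par c); first by rewrite /nbc a_p orbT.
move=> t' Dt' step _; split.
  by rewrite (tree_root_iter (j := 1) Dc dc) same_root (tree_root_step Dt Dt' step).
rewrite /chase_measure anc dep_p; case: ifP => _; lia.
Qed.

Section Chase.
Variables (ig ih : 'I_2) (inv : W -> Prop) (shadow target : W -> W) (Dg : pred W).
Hypothesis ig_ih : ig != ih.
Hypothesis shadow_nbc : forall r r', inv r -> nbc adj r r' -> nbc adj (shadow r) (shadow r').
Hypothesis target_dom : forall r, inv r -> target r \in D.
Hypothesis shadow_dom : forall r, inv r -> shadow r \in Dg.
Hypothesis target_step : forall r r', inv r -> shadow r <> target r -> nbc adj r r' ->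
  [\/ shadow r' = r', shadow r' = target r' | inv r' /\ tree_step (target r) (target r')].

Definition chase_pos (C : {ffun 'I_2 -> W}) r :=
  [/\ C ih \in D, C ig \in Dg & nbc adj (C ig) (shadow r)].

Hypothesis win_meet : forall C r, chase_pos C r -> shadow r = target r -> cops_win adj C r.
Hypothesis win_reach : forall C r, inv r -> chase_pos C r ->
  nbc adj (C ih) (target r) -> cops_win adj C r.

Theorem cops_win_chase C r : inv r -> chase_pos C r ->
  tree_root (C ih) = tree_root (target r) -> cops_win adj C r.
Proof.
pose P C r := [/\ inv r, chase_pos C r, tree_root (C ih) = tree_root (target r),
  ~~ nbc adj (C ih) (target r) & shadow r <> target r].
have win_P : forall C r, P C r -> cops_win adj C r.
  apply: (cops_win_measure (mu := fun C r => chase_measure (C ih) (target r))).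
  move=> C1 r1 [inv1 [Dh Dg_g near_g] same_root far ne].
  have [c' [Dc' move_h] pursue] := tree_pursuit Dh (target_dom inv1) same_root far.
  exists (cops2 ig (shadow r1) c'); first exact: cops2_nbc ig_ih near_g move_h.
  move=> r' rr'; rewrite /P /chase_pos cops2_l cops2_r //.
  have near_g' := shadow_nbc inv1 rr'.
  have Dg_g' := shadow_dom inv1.
  case: (target_step inv1 ne rr') => [caught|meet|[inv' step]].
  - by left; apply: (cops_win_nbc (i := ig)); rewrite cops2_l -caught.
  - by left; apply: win_meet meet; split; rewrite ?cops2_l ?cops2_r.
  have Dt' := target_dom inv'.
  case: (boolP (nbc adj c' (target r'))) => far'.
    by left; apply: win_reach; rewrite // /chase_pos ?cops2_l ?cops2_r.
  case: (eqVneq (shadow r') (target r')) => [meet|/eqP ne'].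
    by left; apply: win_meet meet; split; rewrite ?cops2_l ?cops2_r.
  have [root' lt'] := pursue _ Dt' step far'.
  by right; split.
move=> inv_r pos same_root; case: (boolP (nbc adj (C ih) (target r))) => [|far].
  exact: win_reach.
case: (eqVneq (shadow r) (target r)) => [|/eqP ne]; first exact: win_meet.
by apply: win_P; split.
Qed.

End Chase.
End RootedTree.
End CopsAndRobber.

Lemma val_insubd_ord p (i0 : 'I_p) i : i < p -> val (insubd i0 i) = i.
Proof. by rewrite val_insubd => ->. Qed.

Lemma insubd_ord_eq p (i0 j : 'I_p) (i : nat) : i = j -> insubd i0 i = j.
Proof. by move=> ->; apply: val_inj; rewrite val_insubd_ord. Qed.

Definition heap_depth (i : nat) := trunc_log 2 i.+1.

Lemma heap_depth_level h i : 2 ^ h - 1 <= i -> i < 2 ^ h.+1 - 1 -> heap_depth i = h.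
Proof.
move=> ge_i lt_i; apply: trunc_log_eq => //.
have := expn_gt0 2 h; rewrite expnS in lt_i *; lia.
Qed.

Lemma heap_depth_parent i : 0 < i -> heap_depth i.-1./2 = (heap_depth i).-1.
Proof.
move=> i_gt0; rewrite /heap_depth (@trunc_log2S i.+1); last by lia.
by have -> : i.-1./2.+1 = i.+1./2 by lia.
Qed.

Lemma heap_depth_gt0 i : 0 < i -> 0 < heap_depth i.
Proof. by case: i => // i _; rewrite /heap_depth trunc_log_gt0. Qed.

Lemma heap_depth_eq0 i : heap_depth i = 0 -> i = 0.
Proof. by case: i => // i /eqP; rewrite -leqn0 leqNgt heap_depth_gt0. Qed.

Section Construction.
Variables (s l m : nat) (V : finType) (arc : rel V)
  (pin pout : arcT arc -> 'I_(2 ^ (s - 1))) (sigma : 'I_#|V| -> V).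
Hypotheses (s_gt0 : 0 < s) (m_gt0 : 0 < m) (l_large : #|V| + m + s < l).
Hypothesis sigma_inj : injective sigma.
Variable v0 : V. (* junk value of [at_pos] and [base2] *)
Hypothesis out_arc : forall a, exists e : arcT arc, (val e).1 = a.

Local Notation N := (2 ^ s.+1 - 1).
Local Notation k := (2 ^ (s - 1)).
Local Notation n := #|V|.
Local Notation G := (HV s l m arc).
Local Notation adj := (@Hslm_adj s l m V arc pin pout sigma).

Definition tnode a c (i : 'I_N) : G := inl (a, c, i).
Definition mnode (e : arcT arc) t : G := inr (inl (e, t)).
Definition snode e c t (d : 'I_(l - 1)) : G := inr (inr (inl (e, c, t, d))).
Definition qnode a (j : 'I_m) : G := inr (inr (inr (a, j))).

Inductive hedge : G -> G -> Prop :=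
| hedge_tree a c (i j : 'I_N) : (j : nat) = i.*2.+1 \/ (j : nat) = i.*2.+2 ->
    hedge (tnode a c i) (tnode a c j)
| hedge_leaf a c (i : 'I_N) e t (d : 'I_(l - 1)) : (d : nat) = 0 ->
    leaf_ok pin pout a e t i -> hedge (tnode a c i) (snode e c t d)
| hedge_side e c t (d d' : 'I_(l - 1)) : (d' : nat) = d.+1 ->
    hedge (snode e c t d) (snode e c t d')
| hedge_side_mid e c t (d : 'I_(l - 1)) : (d : nat) = l - 2 ->
    hedge (snode e c t d) (mnode e t)
| hedge_mid e : hedge (mnode e false) (mnode e true)
| hedge_root_q a (i : 'I_N) (j : 'I_m) : (i : nat) = 0 -> (j : nat) = 0 ->
    hedge (tnode a false i) (qnode a j)
| hedge_q a (i j : 'I_m) : (j : nat) = i.+1 -> hedge (qnode a i) (qnode a j)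
| hedge_cycle a b (i j : 'I_m) : (i : nat) = m - 1 -> (j : nat) = m - 1 ->
    cyc_next sigma a b -> hedge (qnode a i) (qnode b j).

Lemma l1_gt0 : 0 < l - 1.
Proof. lia. Qed.

Lemma Hgen_hedge x y : Hgen pin pout sigma x y -> hedge x y.
Proof.
have l1_neq0 : (l - 1 == 0) = false by apply/eqP; lia.
case: x => [[[a c] i]|[[e [|]]|[[[[e c] t] d]|[a j]]]];
case: y => [[[b c'] i']|[[e' [|]]|[[[[e' c'] t'] d']|[b j']]]] //=;
  rewrite ?l1_neq0 //.
- case/and3P => /eqP <- /eqP <- ij; apply: hedge_tree.
  by case/orP: ij => /eqP ij; [left|right].
- by case/and3P => /eqP <- /eqP d0 leaf; apply: hedge_leaf.
- by case/and4P => /eqP <- /eqP -> /eqP i0 /eqP j0; exact: hedge_root_q.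
- by move=> /eqP <-; exact: hedge_mid.
- by case/and3P => /eqP <- /eqP <- /eqP d_last; apply: hedge_side_mid.
- by case/and3P => /eqP <- /eqP <- /eqP d_last; apply: hedge_side_mid.
- by case/and4P => /eqP <- /eqP <- /eqP <- /eqP dd'; apply: hedge_side.
- case/orP => [/andP[/eqP <- /eqP ij]|/and3P[/eqP i_last /eqP j_last next]].
    exact: hedge_q.
  exact: hedge_cycle.
Qed.

Lemma hedge_Hgen x y : hedge x y -> Hgen pin pout sigma x y.
Proof.
case=> /=.
- by move=> a c i j [] ->; rewrite !eqxx // orbT.
- by move=> a c i e t d -> ->; rewrite eqxx.
- by move=> e c t d d' ->; rewrite !eqxx.
- by move=> e c t d ->; rewrite !eqxx.
- by move=> e; rewrite eqxx.
- by move=> a i j -> ->; rewrite !eqxx.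
- by move=> a i j ->; rewrite !eqxx.
- by move=> a b i j -> -> ->; rewrite !eqxx orbT.
Qed.

Lemma adjE x y : adj x y <-> hedge x y \/ hedge y x.
Proof.
rewrite /Hslm_adj; split; first by case/orP => /Hgen_hedge; [left|right].
by case=> /hedge_Hgen ->; rewrite ?orbT.
Qed.

Lemma Hslm_adj_sym x y : adj x y -> adj y x.
Proof. by rewrite /Hslm_adj orbC. Qed.

Lemma hedge_adj x y : hedge x y -> adj x y.
Proof. by move=> xy; apply/adjE; left. Qed.

Lemma hedge_adjV x y : hedge y x -> adj x y.
Proof. by move=> yx; apply/adjE; right. Qed.

Lemma adj_nbc x y : adj x y -> nbc adj x y.
Proof. by rewrite /nbc => ->; rewrite orbT. Qed.

Lemma nbcC x y : nbc adj x y -> nbc adj y x.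
Proof. exact: (@nbc_sym _ adj Hslm_adj_sym). Qed.

Lemma N_gt0 : 0 < N.
Proof. by rewrite subn_gt0 -{1}(expn0 2) ltn_exp2l. Qed.

Lemma exp2s : 2 ^ s = k + k.
Proof. by rewrite -{1}(prednK s_gt0) expnS mul2n -addnn subn1. Qed.

Lemma NE : N = (k + k + k + k).-1.
Proof. rewrite expnS exp2s; lia. Qed.

Local Notation oN := (insubd (Ordinal N_gt0)).
Local Notation oL := (insubd (Ordinal l1_gt0)).
Local Notation oM := (insubd (Ordinal m_gt0)).

Definition leaf_out (e : arcT arc) := 2 ^ s - 1 + k + pout e.
Definition leaf_in (e : arcT arc) := 2 ^ s - 1 + pin e.

Ltac ord_eq := first [apply: insubd_ord_eq | symmetry; apply: insubd_ord_eq];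
  rewrite /=; try rewrite /leaf_in; try rewrite /leaf_out; lia.

Lemma leaf_out_lt e : leaf_out e < N.
Proof. have := ltn_ord (pout e); rewrite /leaf_out NE exp2s; lia. Qed.

Lemma leaf_in_lt e : leaf_in e < N.
Proof. have := ltn_ord (pin e); rewrite /leaf_in NE exp2s; lia. Qed.

Definition pos (a : V) : nat := if [pick i | sigma i == a] is Some i then val i else 0.

Lemma posP a : exists2 i : 'I_n, sigma i = a & val i = pos a.
Proof.
have /codomP [i ->] := inj_card_onto sigma_inj (eq_leq (esym (card_ord n))) a.
rewrite /pos; case: pickP => [j /eqP sj|none]; first by exists j.
by have := none i; rewrite eqxx.
Qed.

Lemma pos_lt a : pos a < n.
Proof. by have [i _ <-] := posP a; exact: ltn_ord. Qed.

Definition at_pos (i : nat) : V := if insub i is Some o then sigma o else v0.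

Lemma at_posK a : at_pos (pos a) = a.
Proof. by have [i <- <-] := posP a; rewrite /at_pos valK. Qed.

Lemma pos_at i : i < n -> pos (at_pos i) = i.
Proof.
move=> lt_i; rewrite /at_pos insubT.
by have [j /sigma_inj -> <-] := posP (sigma (Ordinal lt_i)).
Qed.

Lemma cyc_nextE a b : cyc_next sigma a b = (pos b == (pos a).+1 %% n).
Proof.
have [i sa ia] := posP a; have [j sb jb] := posP b.
apply/idP/idP.
  case/existsP => i' /existsP [j' /and3P[/eqP <- /eqP <- /eqP ij]].
  have [i'' /sigma_inj -> <-] := posP (sigma i').
  by have [j'' /sigma_inj -> <-] := posP (sigma j'); rewrite ij.
by move/eqP=> ab; apply/existsP; exists i; apply/existsP; exists j; rewrite sa sb ia jb ab !eqxx.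
Qed.


Definition out_leaf (e : arcT arc) : G := tnode (val e).1 false (oN (leaf_out e)).
Definition in_leaf (e : arcT arc) : G := tnode (val e).2 false (oN (leaf_in e)).

Definition copy2 : pred G := fun x =>
  match x with
  | inl (_, c, _) | inr (inr (inl (_, c, _, _))) => c
  | _ => false
  end.

Definition core : pred G := fun x =>
  match x with inl (_, c, _) => ~~ c | inr (inr (inr _)) => true | _ => false end.

Definition dom1 : pred G := fun x =>
  match x with
  | inl (_, c, _) => ~~ c
  | inr (inr (inl (_, c, t, d))) => ~~ c || ~~ t && (nat_of_ord d == l - 2)
  | _ => true
  end.

Lemma core_dom1 x : x \in core -> x \in dom1.
Proof. by case: x => [[[a c] i]|[[e t]|[[[[e c] t] d]|[a j]]]]. Qed.

Definition fold (x : G) : G :=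
  match x with
  | inl (a, _, i) => tnode a false i
  | inr (inr (inl (e, _, t, d))) => snode e false t d
  | _ => x
  end.

Lemma hedge_fold x y : hedge x y -> hedge (fold x) (fold y).
Proof.
case=> /= *; [exact: hedge_tree | exact: hedge_leaf | exact: hedge_side
  | exact: hedge_side_mid | exact: hedge_mid | exact: hedge_root_q | exact: hedge_q
  | exact: hedge_cycle].
Qed.

Lemma nbc_fold x y : nbc adj x y -> nbc adj (fold x) (fold y).
Proof.
case/orP => [/eqP ->|/adjE [] /hedge_fold xy]; first exact: nbc_refl.
  exact/adj_nbc/hedge_adj.
exact/adj_nbc/hedge_adjV.
Qed.

Lemma fold_notin_copy2 x : fold x \notin copy2.
Proof. by case: x => [[[a c] i]|[[e t]|[[[[e c] t] d]|[a j]]]]. Qed.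

Lemma fold_id x : x \notin copy2 -> fold x = x.
Proof. by case: x => [[[a [|]] i]|[[e t]|[[[[e [|]] t] d]|[a j]]]]. Qed.

Lemma fold_dom1 x : fold x \in dom1.
Proof. by case: x => [[[a c] i]|[[e t]|[[[[e c] t] d]|[a j]]]]. Qed.

(* A spanning tree of [dom1] rooted at q(a_0): the cycle C loses its edge q(a_(n-1)) q(a_0)
   and each path P_1(ab) loses its edge at the leaf of T_1^in(b). *)
Definition up1 (x : G) : G :=
  match x with
  | inl (a, c, i) =>
      if c then x else if nat_of_ord i is i'.+1 then tnode a false (oN i'./2) else qnode a (oM 0)
  | inr (inl (e, t)) => if t then mnode e false else snode e false false (oL (l - 2))
  | inr (inr (inl (e, c, t, d))) =>
      if c then (if ~~ t && (nat_of_ord d == l - 2) then mnode e false else x)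
      else if t then
        (if nat_of_ord d == l - 2 then mnode e true else snode e false true (oL d.+1))
      else (if nat_of_ord d is d'.+1 then snode e false false (oL d') else out_leaf e)
  | inr (inr (inr (a, j))) =>
      if j < m - 1 then qnode a (oM j.+1)
      else if pos a is i.+1 then qnode (at_pos i) j else x
  end.

Definition depth1 (x : G) : nat :=
  match x with
  | inl (a, _, i) => pos a + m + heap_depth i
  | inr (inl (e, t)) => pos (val e).1 + m + s + l + t
  | inr (inr (inl (e, c, t, d))) =>
      if c then pos (val e).1 + m + s + l + 1
      else if t then pos (val e).1 + m + s + l + 1 + (l - 1 - d)
      else pos (val e).1 + m + s + d + 1
  | inr (inr (inr (a, j))) => pos a + (m - 1 - j)
  end.

Definition root0 : G := qnode (at_pos 0) (oM (m - 1)).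

Lemma up1_edge_tnode a i : 0 < depth1 (tnode a false i) ->
  let x := tnode a false i in [/\ up1 x \in dom1, depth1 (up1 x) = (depth1 x).-1 & adj x (up1 x)].
Proof.
case: i => [[|i] lt_i] /= _.
  split => //; first by rewrite val_insubd_ord // /heap_depth trunc_log1; lia.
  by apply: hedge_adj; apply: hedge_root_q => //; rewrite val_insubd_ord.
have lt_i2 : i./2 < N by lia.
split => //.
  rewrite val_insubd_ord // (heap_depth_parent (ltn0Sn i)).
  have := heap_depth_gt0 (ltn0Sn i); lia.
apply: hedge_adjV; apply: (@hedge_tree a false (oN i./2) (Ordinal lt_i)).
by rewrite /= val_insubd_ord //; lia.
Qed.

Lemma up1_edge_qnode a j : 0 < depth1 (qnode a j) ->
  let x := qnode a j in [/\ up1 x \in dom1, depth1 (up1 x) = (depth1 x).-1 & adj x (up1 x)].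
Proof.
rewrite /=; case: ifP => [lt_j|ge_j] dep_x.
  split => //; first by rewrite /= val_insubd_ord //; lia.
  by apply: hedge_adj; apply: hedge_q; rewrite val_insubd_ord //; lia.
have j_last : nat_of_ord j = m - 1 by have := ltn_ord j; move/negbT: ge_j; lia.
move: dep_x; have := pos_lt a; case pos_a: (pos a) => [|i] lt_i dep_x.
  by rewrite j_last in dep_x; lia.
split => //; first by rewrite /= pos_at; lia.
apply: hedge_adjV; apply: hedge_cycle => //.
by rewrite cyc_nextE pos_at ?pos_a ?modn_small //; lia.
Qed.

Lemma up1_edge x : x \in dom1 -> 0 < depth1 x ->
  [/\ up1 x \in dom1, depth1 (up1 x) = (depth1 x).-1 & adj x (up1 x)].
Proof.
case: x => [[[a [|]] i]|[[e [|]]|[[[[e [|]] [|]] d]|[a j]]]] //;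
  try by move=> _; first [exact: up1_edge_tnode | exact: up1_edge_qnode].
all: rewrite /= /in_mem /=.
- by move=> _ _; split => //; [rewrite /=; lia | exact: hedge_adjV (hedge_mid e)].
- move=> _ _; split => //; first by rewrite /= val_insubd_ord; lia.
  by apply: hedge_adjV; apply: hedge_side_mid; rewrite val_insubd_ord //; lia.
- case: eqP => // d_last _ _ /=; split => //; first by rewrite /=; lia.
  exact/hedge_adj/hedge_side_mid.
- case: eqP => [d_last|d_mid] _ _ /=.
    by split => //; [rewrite /=; lia | exact/hedge_adj/hedge_side_mid].
  have lt_d : d.+1 < l - 1 by have := ltn_ord d; lia.
  split => //; first by rewrite /= val_insubd_ord //; lia.
  by apply: hedge_adj; apply: hedge_side; rewrite val_insubd_ord.
- case: d => [[|d] lt_d] /= _ _.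
    split => //.
      by rewrite val_insubd_ord ?leaf_out_lt // (@heap_depth_level s) ?leaf_out_lt //;
        rewrite /leaf_out; lia.
    apply: hedge_adjV; apply: hedge_leaf => //.
    by rewrite /leaf_ok /= val_insubd_ord ?leaf_out_lt // !eqxx.
  have lt_d' : d < l - 1 by lia.
  split => //; first by rewrite /= val_insubd_ord //; lia.
  apply: hedge_adjV; apply: (@hedge_side e false false (oL d) (Ordinal lt_d)).
  by rewrite /= val_insubd_ord.
Qed.

Lemma up1_core x : x \in core -> up1 x \in core.
Proof.
case: x => [[[a [|]] [[|i] lt_i]]|[[e t]|[[[[e c] t] d]|[a j]]]] //=.
by rewrite /in_mem /=; case: ifP => // _; case: (pos a).
Qed.

Lemma up1_edge_core x : x \in core -> 0 < depth1 x ->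
  [/\ up1 x \in core, depth1 (up1 x) = (depth1 x).-1 & adj x (up1 x)].
Proof.
move=> core_x dep_x; have [_ dep_up a_up] := up1_edge (core_dom1 core_x) dep_x.
by split => //; apply: up1_core.
Qed.

Lemma depth1_eq0 x : x \in dom1 -> depth1 x = 0 -> x = root0.
Proof.
case: x => [[[a [|]] i]|[[e [|]]|[[[[e [|]] [|]] d]|[a j]]]] //=; try lia.
move=> _ dep0.
have pos_a : pos a = 0 by lia.
have j_last : nat_of_ord j = m - 1 by have := ltn_ord j; lia.
have root_a : at_pos 0 = a by rewrite -pos_a at_posK.
by rewrite /root0 root_a; congr qnode; ord_eq.
Qed.

Lemma root1 x : x \in dom1 -> tree_root up1 depth1 x = root0.
Proof.
move=> dom_x; have [dom_r dep_r] := iter_par_dom up1_edge dom_x (leqnn (depth1 x)).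
by apply: depth1_eq0; rewrite // dep_r subnn.
Qed.

Lemma hedge_core_step u v : u \in core -> v \in core -> hedge u v ->
  tree_step up1 depth1 u v \/ v = root0.
Proof.
move=> core_u core_v uv; case: uv core_u core_v => //.
- move=> a [|] i j ij //= _ _; left.
  have j_gt0 : 0 < j by lia.
  apply/or3P; apply: Or33; apply/andP; split.
    by have := heap_depth_gt0 j_gt0; rewrite /=; lia.
  apply/eqP; case: j ij j_gt0 => [[|j] lt_j] //= ij _.
  congr tnode; ord_eq.
- move=> a i j i0 j0 _ _; left; apply/or3P; apply: Or32; apply/andP.
  by rewrite /= i0; split; [lia | apply/eqP; congr qnode; ord_eq].
- move=> a i j ij _ _; left; apply/or3P; apply: Or32; apply/andP.
  have lt_i : i < m - 1 by have := ltn_ord j; lia.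
  by rewrite /= lt_i; split; [lia | apply/eqP; congr qnode; ord_eq].
- move=> a b i j i_last j_last; rewrite cyc_nextE => /eqP pos_b _ _.
  have := pos_lt a; rewrite leq_eqVlt => /orP[/eqP last_a|lt_a].
    by rewrite last_a modnn in pos_b; right; apply: depth1_eq0; rewrite //= pos_b j_last subnn.
  rewrite modn_small // in pos_b; left; apply/or3P; apply: Or33; apply/andP.
  have j_not_lt : (j < m - 1) = false by lia.
  rewrite /= j_not_lt pos_b at_posK; split => //.
  by apply/eqP; congr qnode; apply: val_inj; rewrite /= i_last j_last.
Qed.

Lemma hedge_up1_step u v : u \notin copy2 -> v \notin copy2 -> u \notin core -> v \notin core ->
  hedge u v -> tree_step up1 depth1 u v.
Proof.
move=> + + + + uv; case: uv => //.
- by move=> a [|] i j.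
- by move=> a [|] i e t d.
- move=> e [|] [|] d d' dd' //= _ _ _ _.
    apply/or3P; apply: Or32; apply/andP; split; first by rewrite /=; lia.
    have d_not_last : (nat_of_ord d == l - 2) = false by have := ltn_ord d'; lia.
    by rewrite /= d_not_last; apply/eqP; congr snode; ord_eq.
  apply/or3P; apply: Or33; apply/andP; split; first by rewrite /=; lia.
  apply/eqP; case: d' dd' => [[|d'] lt_d'] //= dd'.
  by congr snode; ord_eq.
- move=> e [|] [|] d d_last //= _ _ _ _.
    apply/or3P; apply: Or32; apply/andP; split; first by rewrite /=; lia.
    by rewrite /= d_last eqxx.
  apply/or3P; apply: Or33; apply/andP; split; first by rewrite /=; lia.
  by apply/eqP; rewrite /=; congr snode; ord_eq.
- move=> e _ _ _ _.
  by apply/or3P; apply: Or33; apply/andP; split; first by rewrite /=; lia.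
Qed.

Lemma depth1_out_leaf e : depth1 (out_leaf e) = pos (val e).1 + m + s.
Proof.
by rewrite /= val_insubd_ord ?leaf_out_lt // (@heap_depth_level s) ?leaf_out_lt //;
  rewrite /leaf_out; lia.
Qed.

Lemma depth1_in_leaf e : depth1 (in_leaf e) = pos (val e).2 + m + s.
Proof.
by rewrite /= val_insubd_ord ?leaf_in_lt // (@heap_depth_level s) ?leaf_in_lt //;
  rewrite /leaf_in; lia.
Qed.

Lemma depth1_leaves_lt e : depth1 (out_leaf e) + depth1 (in_leaf e) < l.*2.
Proof.
rewrite depth1_out_leaf depth1_in_leaf.
by have := pos_lt (val e).1; have := pos_lt (val e).2; lia.
Qed.

Definition core_walk e := tree_walk up1 depth1 (out_leaf e) (in_leaf e).

Lemma leaves_same_root e :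
  tree_root up1 depth1 (out_leaf e) = tree_root up1 depth1 (in_leaf e).
Proof. by rewrite !root1. Qed.

Lemma core_walk_core e p : core_walk e p \in core.
Proof. exact: (tree_walk_dom up1_edge_core). Qed.

Lemma core_walk_step e p : nbc adj (core_walk e p) (core_walk e p.+1).
Proof. exact: (tree_walk_step Hslm_adj_sym up1_edge_core (leaves_same_root e)). Qed.

Lemma core_walk_end e p : depth1 (out_leaf e) + depth1 (in_leaf e) <= p ->
  core_walk e p = in_leaf e.
Proof. exact: (tree_walk_end (leaves_same_root e)). Qed.

(* The vertex of P_1(ab) at distance p from its out-leaf goes to step p of the core walk,
   which reaches the in-leaf before step 2l + 1. *)
Definition path_walk (x : G) : G :=
  match x with
  | inr (inl (e, t)) => core_walk e (l + t)
  | inr (inr (inl (e, c, t, d))) => if t then core_walk e (l.*2 - d) else core_walk e d.+1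
  | _ => x
  end.

Definition retract (x : G) : G := path_walk (fold x).

Lemma retract_core x : retract x \in core.
Proof.
case: x => [[[a c] i]|[[e t]|[[[[e c] [|]] d]|[a j]]]] //=; exact: core_walk_core.
Qed.

Lemma path_walk_core x : x \in core -> path_walk x = x.
Proof. by case: x => [[[a [|]] i]|[[e t]|[[[[e c] t] d]|[a j]]]]. Qed.

Lemma hedge_retract x y : hedge x y -> nbc adj (retract x) (retract y).
Proof.
case.
- by move=> a c i j ij; apply/adj_nbc/hedge_adj/hedge_tree.
- move=> a c i e [|] d d0; rewrite /leaf_ok => /andP[/eqP end_e /eqP leaf_i].
    change (nbc adj (tnode a false i) (core_walk e (l.*2 - d))); rewrite d0 subn0.
    have -> : tnode a false i = in_leaf e.
      by rewrite /in_leaf -end_e; congr tnode; ord_eq.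
    rewrite -(@core_walk_end e l.*2.+1); last by have := depth1_leaves_lt e; lia.
    by rewrite nbcC ?core_walk_step.
  change (nbc adj (tnode a false i) (core_walk e d.+1)); rewrite d0.
  have -> : tnode a false i = out_leaf e.
    by rewrite /out_leaf -end_e; congr tnode; ord_eq.
  exact: core_walk_step e 0.
- move=> e c [|] d d' dd'.
    change (nbc adj (core_walk e (l.*2 - d)) (core_walk e (l.*2 - d'))); rewrite dd'.
    have -> : l.*2 - d = (l.*2 - d.+1).+1 by have := ltn_ord d'; lia.
    by rewrite nbcC ?core_walk_step.
  change (nbc adj (core_walk e d.+1) (core_walk e d'.+1)); rewrite dd'.
  exact: core_walk_step.
- move=> e c [|] d d_last.
    change (nbc adj (core_walk e (l.*2 - d)) (core_walk e (l + 1))); rewrite d_last.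
    have -> : l.*2 - (l - 2) = (l + 1).+1 by lia.
    by rewrite nbcC ?core_walk_step.
  change (nbc adj (core_walk e d.+1) (core_walk e (l + 0))); rewrite d_last.
  have -> : l + 0 = (l - 2).+1.+1 by lia.
  exact: core_walk_step.
- move=> e; change (nbc adj (core_walk e (l + 0)) (core_walk e (l + 1))).
  by rewrite addn0 addn1 core_walk_step.
- by move=> a i j i0 j0; apply/adj_nbc/hedge_adj/hedge_root_q.
- by move=> a i j ij; apply/adj_nbc/hedge_adj/hedge_q.
- by move=> a b i j i_last j_last next; apply/adj_nbc/hedge_adj/hedge_cycle.
Qed.

Lemma nbc_retract x y : nbc adj x y -> nbc adj (retract x) (retract y).
Proof.
case/orP => [/eqP ->|/adjE [xy|yx]]; first exact: nbc_refl.
  exact: hedge_retract.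
by apply: nbcC; apply: hedge_retract.
Qed.

Definition base2 (x : G) : V :=
  match x with
  | inl (a, _, _) => a
  | inr (inr (inl (e, _, t, _))) => if t then (val e).2 else (val e).1
  | _ => v0
  end.

Definition up2 (x : G) : G :=
  match x with
  | inl (a, c, i) => if nat_of_ord i is i'.+1 then tnode a c (oN i'./2) else x
  | inr (inr (inl (e, c, t, d))) =>
      if nat_of_ord d is d'.+1 then snode e c t (oL d')
      else tnode (if t then (val e).2 else (val e).1) c (oN (if t then leaf_in e else leaf_out e))
  | _ => x
  end.

Definition depth2 (x : G) : nat :=
  match x with
  | inl (_, _, i) => heap_depth i
  | inr (inr (inl (_, _, _, d))) => s + d + 1
  | _ => 0
  end.

Lemma up2_edge x : x \in copy2 -> 0 < depth2 x ->
  [/\ up2 x \in copy2, depth2 (up2 x) = (depth2 x).-1 & adj x (up2 x)].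
Proof.
case: x => [[[a [|]] i]|[[e t]|[[[[e [|]] t] d]|[a j]]]] //=; rewrite /in_mem /=.
- case: i => [[|i] lt_i] /= _; first by rewrite /heap_depth trunc_log1.
  have lt_i2 : i./2 < N by lia.
  split => //; first by rewrite /= val_insubd_ord // (heap_depth_parent (ltn0Sn i)).
  apply: hedge_adjV; apply: (@hedge_tree a true (oN i./2) (Ordinal lt_i)).
  by rewrite /= val_insubd_ord //; lia.
- have leaf_lt : (if t then leaf_in e else leaf_out e) < N.
    by case: t; [apply: leaf_in_lt | apply: leaf_out_lt].
  case: d => [[|d] lt_d] /= _ _.
    split => //.
      rewrite /= val_insubd_ord // (@heap_depth_level s) //;
        by case: t {leaf_lt}; rewrite /leaf_in /leaf_out; lia.
    apply: hedge_adjV; apply: hedge_leaf => //.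
    rewrite /leaf_ok; case: t {leaf_lt};
      by rewrite /= val_insubd_ord ?leaf_in_lt ?leaf_out_lt // !eqxx.
  have lt_d' : d < l - 1 by lia.
  split => //; first by rewrite /= val_insubd_ord //; lia.
  apply: hedge_adjV; apply: (@hedge_side e true t (oL d) (Ordinal lt_d)).
  by rewrite /= val_insubd_ord.
Qed.

Lemma base2_up2 x : x \in copy2 -> base2 (up2 x) = base2 x.
Proof.
by case: x => [[[a [|]] [[|i] lt_i]]|[[e t]|[[[[e [|]] [|]] [[|d] lt_d]]|[a j]]]].
Qed.

Lemma root2 x : x \in copy2 -> tree_root up2 depth2 x = tnode (base2 x) true (oN 0).
Proof.
move=> copy2_x.
have base_iter j : j <= depth2 x -> base2 (iter j up2 x) = base2 x.
  elim: j => [//|j IH] lt_j.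
  have [copy2_j _] := iter_par_dom up2_edge copy2_x (ltnW lt_j).
  by rewrite iterS base2_up2 // IH // ltnW.
have [copy2_r dep_r] := iter_par_dom up2_edge copy2_x (leqnn (depth2 x)).
rewrite subnn -/(tree_root up2 depth2 x) in copy2_r dep_r.
rewrite -(base_iter _ (leqnn _)) -/(tree_root up2 depth2 x).
move: copy2_r dep_r; case: (tree_root _ _ x) => [[[a [|]] i]|[[e t]|[[[[e [|]] t] d]|[a' j]]]] //=.
  by move=> _ /heap_depth_eq0 i0; congr tnode; ord_eq.
lia.
Qed.

Lemma hedge_copy2_step u v : u \in copy2 -> hedge u v ->
  [/\ v \in copy2, base2 v = base2 u & tree_step up2 depth2 u v] \/ fold v = v.
Proof.
move=> + uv; case: uv => //.
- move=> a [|] i j ij //= _; left; split => //.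
  have j_gt0 : 0 < j by lia.
  apply/or3P; apply: Or33; apply/andP; split; first exact: heap_depth_gt0.
  apply/eqP; case: j ij j_gt0 => [[|j] lt_j] //= ij _.
  by congr tnode; ord_eq.
- move=> a [|] i e t d d0 //=; rewrite /leaf_ok => leaf _; left.
  split; first by [].
    by case: t leaf => /andP[/eqP-> _].
  apply/or3P; apply: Or33; apply/andP; split; first by rewrite /=; lia.
  apply/eqP; rewrite /= d0.
  by case: t leaf => /andP[/eqP-> /eqP leaf_i]; congr tnode; ord_eq.
- move=> e [|] t d d' dd' //= _; left; split => //.
  apply/or3P; apply: Or33; apply/andP; split; first by rewrite /=; lia.
  apply/eqP; case: d' dd' => [[|d'] lt_d'] //= dd'.
  by congr snode; ord_eq.
- by move=> e c t d _ _; right.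
Qed.

Lemma hedge_copy2_stepV u v : u \in copy2 -> hedge v u ->
  [/\ v \in copy2, base2 v = base2 u & tree_step up2 depth2 u v].
Proof.
move=> + vu; case: vu => //.
- move=> a [|] i j ij //= _; split => //.
  have j_gt0 : 0 < j by lia.
  apply/or3P; apply: Or32; apply/andP; split; first exact: heap_depth_gt0.
  apply/eqP; case: j ij j_gt0 => [[|j] lt_j] //= ij _.
  by congr tnode; ord_eq.
- move=> a [|] i e t d d0 //=; rewrite /leaf_ok => leaf _.
  split; first by [].
    by case: t leaf => /andP[/eqP-> _].
  apply/or3P; apply: Or32; apply/andP; split; first by rewrite /=; lia.
  apply/eqP; rewrite /= d0.
  by case: t leaf => /andP[/eqP-> /eqP leaf_i]; congr tnode; ord_eq.
- move=> e [|] t d d' dd' //= _; split => //.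
  apply/or3P; apply: Or32; apply/andP; split; first by rewrite /=; lia.
  by apply/eqP; rewrite /= dd'; congr snode; ord_eq.
Qed.

Lemma nbc_copy2_step u v : u \in copy2 -> nbc adj u v ->
  [/\ v \in copy2, base2 v = base2 u & tree_step up2 depth2 u v] \/ fold v = v.
Proof.
move=> copy2_u /orP[/eqP <-|/adjE [uv|vu]].
- by left; split => //; exact: tree_step_refl.
- exact: hedge_copy2_step.
- by left; apply: hedge_copy2_stepV.
Qed.

(* Where the trees [up1] and [up2] meet: the copy-2 neighbour of a middle edge at [a]. *)
Definition gate (a : V) : G :=
  if [pick e : arcT arc | (val e).1 == a] is Some e then snode e true false (oL (l - 2))
  else root0.

Lemma gateP a : exists2 e, (val e).1 = a & gate a = snode e true false (oL (l - 2)).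
Proof.
rewrite /gate; case: pickP => [e /eqP <-|none]; first by exists e.
by have [e out_e] := out_arc a; have := none e; rewrite out_e eqxx.
Qed.

Lemma gate_copy2 a : gate a \in copy2.
Proof. by have [e _ ->] := gateP a. Qed.

Lemma gate_dom1 a : gate a \in dom1.
Proof. by have [e _ ->] := gateP a; rewrite /in_mem /= val_insubd_ord //=; lia. Qed.

Lemma base2_gate a : base2 (gate a) = a.
Proof. by have [e <- ->] := gateP a. Qed.

Lemma win_in_spider (C : {ffun 'I_2 -> G}) r (X Y : 'I_2) : X != Y ->
  r \in copy2 -> C Y \in copy2 -> nbc adj (C X) (fold r) ->
  tree_root up2 depth2 (C Y) = tree_root up2 depth2 r -> cops_win adj C r.
Proof.
move=> XY copy2_r copy2_Y near_X same_root.
apply: (cops_win_chase Hslm_adj_sym up2_edge (ig := X) (ih := Y)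
  (inv := fun r => r \in copy2) (shadow := fold) (target := id) (Dg := predT)) => //.
- by move=> r1 r2 _; exact: nbc_fold.
- move=> r1 r2 copy2_r1 _ /(nbc_copy2_step copy2_r1) [[copy2_r2 _ step]|fixed].
    by apply: Or33.
  exact: Or31.
- by move=> C' r' [_ _ near] meet; rewrite meet in near; exact: cops_win_nbc near.
- by move=> C' r' _ _ near; exact: cops_win_nbc near.
Qed.

Lemma win_at_gate (C : {ffun 'I_2 -> G}) r (X Y : 'I_2) : X != Y -> r \in copy2 ->
  nbc adj (C X) (fold r) -> nbc adj (C Y) (gate (base2 r)) -> cops_win adj C r.
Proof.
move=> XY copy2_r near_X near_Y.
apply: (CW_move (cops2_nbc XY near_X near_Y)); right => r' rr'.
case: (nbc_copy2_step copy2_r rr') => [[copy2_r' base_r' _]|fixed].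
  apply: (win_in_spider XY copy2_r'); rewrite ?cops2_l ?cops2_r ?gate_copy2 //.
    exact: nbc_fold.
  by rewrite !root2 ?gate_copy2 // base2_gate base_r'.
by apply: (cops_win_nbc (i := X)); rewrite cops2_l -fixed; exact: nbc_fold.
Qed.

Lemma win_fold_guarded (C : {ffun 'I_2 -> G}) r (X Y : 'I_2) : X != Y ->
  nbc adj (C X) (fold r) -> C X \in dom1 -> C Y \in dom1 -> cops_win adj C r.
Proof.
move=> XY near_X dom_X dom_Y.
case: (boolP (r \in copy2)) => [copy2_r|/fold_id fixed]; last first.
  by apply: (cops_win_nbc (i := X)); rewrite -fixed.
apply: (cops_win_chase Hslm_adj_sym up1_edge (ig := X) (ih := Y)
  (inv := fun r => r \in copy2) (shadow := fold) (target := fun r => gate (base2 r))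
  (Dg := dom1)) => //.
- by move=> r1 r2 _; exact: nbc_fold.
- by move=> r1 _; exact: gate_dom1.
- by move=> r1 _; exact: fold_dom1.
- move=> r1 r2 copy2_r1 _ /(nbc_copy2_step copy2_r1) [[copy2_r2 base_r2 _]|fixed].
    by apply: Or33; rewrite base_r2; split => //; exact: tree_step_refl.
  exact: Or31.
- by move=> C' r' _ meet; have := fold_notin_copy2 r'; rewrite meet gate_copy2.
- by move=> C' r' copy2_r' [_ _ near_X'] near_Y'; exact: win_at_gate near_X' near_Y'.
- by rewrite !root1 // gate_dom1.
Qed.

Lemma win_retract_guarded (C : {ffun 'I_2 -> G}) r (X Y : 'I_2) : X != Y ->
  nbc adj (C X) (retract r) -> C X \in core -> C Y \in dom1 -> cops_win adj C r.
Proof.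
move=> XY near_X core_X dom_Y.
apply: (cops_win_chase Hslm_adj_sym up1_edge (ig := X) (ih := Y)
  (inv := fun => True) (shadow := retract) (target := fold) (Dg := core)) => //.
- by move=> r1 r2 _; exact: nbc_retract.
- by move=> r1 _; exact: fold_dom1.
- by move=> r1 _; exact: retract_core.
- move=> r1 r2 _ apart rr'.
  case: (boolP (fold r2 \in core)) => [core2|out2].
    by apply: Or32; rewrite /retract path_walk_core.
  have out1 : fold r1 \notin core.
    by apply/negP => core1; apply: apart; rewrite /retract path_walk_core.
  apply: Or33; split => //.
  case/orP: (nbc_fold rr') => [/eqP ->|/adjE [step|step]]; first exact: tree_step_refl.
    exact: hedge_up1_step (fold_notin_copy2 _) (fold_notin_copy2 _) out1 out2 step.
  apply: tree_step_sym.
  exact: hedge_up1_step (fold_notin_copy2 _) (fold_notin_copy2 _) out2 out1 step.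
- move=> C' r' [dom_Y' core_X' near_X'] meet.
  by apply: (win_fold_guarded XY); rewrite -?meet // core_dom1.
- move=> C' r' _ [dom_Y' core_X' _] near_Y'.
  by apply: (win_fold_guarded (X := Y) (Y := X)); rewrite // 1?eq_sym // core_dom1.
- by rewrite !root1 // fold_dom1.
Qed.

Theorem two_cops_win : k_cops_win adj 2.
Proof.
exists [ffun => root0] => r.
have X_Y : (ord0 : 'I_2) != ord_max by [].
apply: (cops_win_chase Hslm_adj_sym up1_edge_core (ig := ord0) (ih := ord_max)
  (inv := fun => True) (shadow := fun => root0) (target := retract) (Dg := core)) => //.
- by move=> r1 r2 _ _; exact: nbc_refl.
- by move=> r1 _; exact: retract_core.
- move=> r1 r2 _ apart /nbc_retract /orP[/eqP ->|/adjE [step|step]].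
  + by apply: Or33; split => //; exact: tree_step_refl.
  + case: (hedge_core_step (retract_core r1) (retract_core r2) step) => [step'|->].
      by apply: Or33.
    exact: Or32.
  + case: (hedge_core_step (retract_core r2) (retract_core r1) step) => [step'|at_root].
      by apply: Or33; split => //; exact: tree_step_sym.
    by case: apart.
- move=> C' r' [core_h core_g near_g] meet.
  by apply: (win_retract_guarded X_Y); rewrite -?meet // core_dom1.
- move=> C' r' _ [core_h core_g _] near_h.
  by apply: (win_retract_guarded (X := ord_max) (Y := ord0)); rewrite // core_dom1.
- by split; rewrite ffunE ?nbc_refl.
- by rewrite ffunE !root1 ?core_dom1 ?retract_core.
Qed.

End Construction.

Theorem lemma5 (s l m : nat) (V : finType) (arc : rel V)
    (pin pout : arcT arc -> 'I_(2 ^ (s - 1))) (sigma : 'I_#|V| -> V) :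
  1 <= s -> 1 <= m -> #|V| + m + s < l ->
  Hs_oriented s arc ->
  (forall e e' : arcT arc, (val e).2 = (val e').2 -> pin e = pin e' -> e = e') ->
  (forall e e' : arcT arc, (val e).1 = (val e').1 -> pout e = pout e' -> e = e') ->
  injective sigma ->
  cop_number_le (@Hslm_adj s l m V arc pin pout sigma) 2.
Proof.
move=> s_gt0 m_gt0 l_large [_ _ out_deg _ _] _ _ sigma_inj.
case: (pickP (fun _ : V => true)) => [v0 _|V_empty]; last first.
  exists 0; split => //; apply: k_cops_win0.
  by case=> [[[a _] _]|[[e _]|[[[[e _] _] _]|[a _]]]];
    first [move: (V_empty a) | move: (V_empty (val e).1)].
exists 2; split => //; apply: (two_cops_win pin pout s_gt0 m_gt0 l_large sigma_inj v0) => a.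
have : 0 < #|[set b | arc a b]| by rewrite out_deg expn_gt0.
by case/card_gt0P => b; rewrite inE => ab; exists (exist _ (a, b) ab).
Qed.
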